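(* Let $R$ be a pre-Schreier domain and let $a,b,c,d\in R$. If $ab=cd$, $a$ and $c$ are relatively prime, and $b$ and $d$ are relatively prime, then $a\sim d$ and $b\sim c$.
   Context: A domain is a commutative ring with identity without zero divisors. A domain $R$ is pre-Schreier if every non-zero $a\in R$ is primal: whenever $a\mid bc$ with $b,c\in R$, there exist $a_1,a_2\in R$ with $a=a_1a_2$, $a_1\mid b$ and $a_2\mid c$. Elements $a,b$ are relatively prime if they have no common non-invertible divisor. $a\sim b$ means $a$ and $b$ are associated. *)

From HB Require Import structures.
From mathcomp Require Import all_boot all_order all_algebra.
Set Implicit Arguments. Unset Strict Implicit. Unset Printing Implicit Defensive.
Import GRing.Theory.
Local Open Scope ring_scope.

Definition rdvd (R : comPzRingType) (a b : R) : Prop := exists x : R, b = a * x.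

Definition assoc (R : comPzRingType) (a b : R) : Prop := rdvd a b /\ rdvd b a.

Definition rel_prime (R : comUnitRingType) (a b : R) : Prop :=
  forall x : R, rdvd x a -> rdvd x b -> x \is a GRing.unit.

Definition primal (R : comPzRingType) (a : R) : Prop :=
  forall b c : R, rdvd a (b * c) ->
    exists a1 a2 : R, a = a1 * a2 /\ rdvd a1 b /\ rdvd a2 c.

Definition pre_schreier (R : idomainType) : Prop :=
  forall a : R, a != 0 -> primal a.

From mathcomp Require Import all_boot all_order all_algebra.
Set Implicit Arguments. Unset Strict Implicit. Unset Printing Implicit Defensive.
Local Open Scope ring_scope.
Import GRing.Theory.

(* In a pre-Schreier domain Euclid's lemma holds for relatively prime
   elements: if x | yz, split x = x1 x2 with x1 | y and x2 | z; then x1 is a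
   common divisor of x and y, hence a unit, so x | z.  From ab = cd we get
   a | cd with a, c coprime, hence a | d, and symmetrically for the other
   three divisibilities. *)

Lemma rdvd_mulr (R : comPzRingType) (a b : R) : rdvd a (a * b).
Proof. by exists b. Qed.

Lemma rdvd_mull (R : comPzRingType) (a b : R) : rdvd b (a * b).
Proof. by exists a; rewrite mulrC. Qed.

Lemma rdvd_unit_mull (R : comUnitRingType) (u v z : R) :
  u \is a GRing.unit -> rdvd v z -> rdvd (u * v) z.
Proof.
move=> Uu [k ->]; exists (u^-1 * k).
by rewrite [u * v]mulrC -mulrA mulVKr.
Qed.

Lemma rel_primeC (R : comUnitRingType) (a b : R) : rel_prime a b -> rel_prime b a.
Proof. by move=> ab x xb xa; apply: ab. Qed.

Lemma rel_prime0l (R : comUnitRingType) (y : R) : rel_prime 0 y -> y != 0.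
Proof.
move=> rp; apply/negP => /eqP y0.
suff : (0 : R) \is a GRing.unit by rewrite unitr0.
by move: rp; rewrite y0 => rp; apply: rp; exists 0; rewrite mulr0.
Qed.

Lemma primal_rdvd_rel_prime (R : comUnitRingType) (x y z : R) :
  primal x -> rdvd x (y * z) -> rel_prime x y -> rdvd x z.
Proof.
move=> px xyz rp; have [x1 [x2 [ex [x1y x2z]]]] := px y z xyz.
rewrite ex in rp *; apply: rdvd_unit_mull x2z.
exact: rp x1 (rdvd_mulr x1 x2) x1y.
Qed.

Lemma pre_schreier_rdvd_rel_prime (R : idomainType) (x y z : R) :
  pre_schreier R -> rdvd x (y * z) -> rel_prime x y -> rdvd x z.
Proof.
move=> psR xyz rp; have [x0 | /psR px] := eqVneq x 0; last first.
  exact: primal_rdvd_rel_prime xyz rp.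
move: xyz rp; rewrite x0 => -[k yz0] /rel_prime0l.
move: yz0; rewrite mul0r => /eqP; rewrite mulf_eq0 => /orP[->//|/eqP ->] _.
by exists 0; rewrite mulr0.
Qed.

Theorem lemma2 (R : idomainType) (HR : pre_schreier R) (a b c d : R) :
  a * b = c * d -> rel_prime a c -> rel_prime b d ->
  assoc a d /\ assoc b c.
Proof.
move=> e ac bd; have ca := rel_primeC ac; have db := rel_primeC bd.
split; split.
- by apply: (pre_schreier_rdvd_rel_prime HR _ ac); rewrite -e; apply: rdvd_mulr.
- by apply: (pre_schreier_rdvd_rel_prime HR _ db); rewrite mulrC e; apply: rdvd_mull.
- by apply: (pre_schreier_rdvd_rel_prime HR _ bd); rewrite mulrC -e; apply: rdvd_mull.
- by apply: (pre_schreier_rdvd_rel_prime HR _ ca); rewrite e; apply: rdvd_mulr.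
Qed.
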